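(* Assume the setting below with $k\ge2$, suppose $\mathcal{S}$ is pseudo-symmetric, and let $(x_0,y_0)\in L$ be the point with $\varphi(x_0,y_0)=g(\mathcal{S})+a$. If $(x_0,y_0)\ne(2,0)$, then either $x_0=0$ or $x_0\equiv1\pmod k$. In particular, $\varphi(x_0,y_0)=\varphi(x_0-x,y_0-y)+\varphi(x,y)$ for all integers $0\le x\le x_0$, $0\le y\le y_0$.
   Context: Setting (AA-semigroups). Let $a,d,k,c$ be positive integers with $\gcd(a,a+d,\ldots,a+kd,c)=1$ and $\gcd(a,d)=1$, and let $\mathcal{S}=\langle a,a+d,\ldots,a+kd,c\rangle$ be the numerical semigroup of non-negative integer combinations of these generators; $g(\mathcal{S})$ is its Frobenius number (largest integer not in $\mathcal{S}$). $\mathcal{S}$ is pseudo-symmetric if $g(\mathcal{S})$ is even and $\mathcal{S}\cup(g(\mathcal{S})-\mathcal{S})=\mathbb{Z}\setminus\{g(\mathcal{S})/2\}$. Put $s_{-1}=a$ and let $s_0$ be the unique integer with $ds_0\equiv c\pmod a$, $0\le s_0<a$. If $s_0=0$ set $m=-1$. Otherwise define $q_{i+1},s_{i+1}$ for $i=0,1,2,\ldots$ by $s_{i-1}=q_{i+1}s_i-s_{i+1}$ with $0\le s_{i+1}<s_i$, and let $m$ be the index with $s_m>0=s_{m+1}$ (so $s_m=\gcd(a,c)$). Define $P_{-1}=0$, $P_0=1$, $P_{i+1}=q_{i+1}P_i-P_{i-1}$ for $i=0,\ldots,m$, and $R_i=\frac1a\big((a+kd)s_i-kcP_i\big)$ for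 $-1\le i\le m+1$; these are integers with $-c/s_m=R_{m+1}<R_m<\cdots<R_0<R_{-1}=a+kd$. Let $v$ be the unique integer with $R_{v+1}\le0<R_v$. Let $L=A\cup B$, where $A=\{(x,y)\in\mathbb{Z}^2:0\le x\le s_v-1,\ 0\le y\le P_{v+1}-P_v-1\}$ and $B=\{(x,y)\in\mathbb{Z}^2:0\le x\le s_v-s_{v+1}-1,\ P_{v+1}-P_v\le y\le P_{v+1}-1\}$. Define $\varphi:\mathbb{Z}^2\to\mathbb{Z}$, $\varphi(x,y)=\lceil x/k\rceil a+xd+yc$. It is known (Rødseth) that $|L|=a$ and $\varphi$ maps $L$ bijectively onto $\mathrm{Ap}(\mathcal{S};a)=\{s\in\mathcal{S}:s-a\notin\mathcal{S}\}$; consequently $g(\mathcal{S})+a=\max\varphi(L)$ is attained at $(s_v-s_{v+1}-1,P_{v+1}-1)$ or at $(s_v-1,P_{v+1}-P_v-1)$. *)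

From Stdlib Require Import ZArith Lia.
Open Scope Z_scope.

Fixpoint sumZ (f : nat -> Z) (n : nat) : Z :=
  match n with
  | O => f O
  | S n' => sumZ f n' + f n
  end.

Definition inS (a d k c n : Z) : Prop :=
  exists (u : nat -> Z) (w : Z),
    (forall i : nat, (i <= Z.to_nat k)%nat -> 0 <= u i) /\ 0 <= w /\
    n = sumZ (fun i => u i * (a + Z.of_nat i * d)) (Z.to_nat k) + w * c.

Definition gens_coprime (a d k c : Z) : Prop :=
  forall g : Z, 0 < g -> (g | a) ->
    (forall i : Z, 0 <= i <= k -> (g | a + i * d)) -> (g | c) -> g = 1.

Definition is_frobenius (a d k c g : Z) : Prop :=
  ~ inS a d k c g /\ forall n : Z, g < n -> inS a d k c n.

Definition pseudo_symmetric (a d k c : Z) : Prop :=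
  exists g : Z, is_frobenius a d k c g /\ Z.Even g /\
    forall z : Z, (inS a d k c z \/ (exists s, inS a d k c s /\ z = g - s))
                  <-> z <> g / 2.

(* Shifted indexing: seqs a s0 t = (s_{t-1}, s_t, P_{t-1}, P_t).
   Step: q_{t} = ceil(s_{t-2}/s_{t-1}), s_t = q_t s_{t-1} - s_{t-2},
   P_t = q_t P_{t-1} - P_{t-2}.  Once s_{t-1} = 0 (i.e. past index m+1)
   the sequence s is absorbing at 0 (values there are never used). *)
Fixpoint seqs (a s0 : Z) (t : nat) : Z * Z * Z * Z :=
  match t with
  | O => (a, s0, 0, 1)
  | S t' =>
      let '(x, y, p, r) := seqs a s0 t' in
      if y =? 0 then (0, 0, r, 0)
      else let q := - ((- x) / y) in (y, q * y - x, r, q * r - p)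
  end.

(* sig a s0 t = s_{t-1};  Pi a s0 t = P_{t-1} *)
Definition sig (a s0 : Z) (t : nat) : Z :=
  let '(x, _, _, _) := seqs a s0 t in x.
Definition Pi (a s0 : Z) (t : nat) : Z :=
  let '(_, _, p, _) := seqs a s0 t in p.

(* Rf t = R_{t-1} = ((a+kd) s_{t-1} - k c P_{t-1}) / a *)
Definition Rf (a d k c s0 : Z) (t : nat) : Z :=
  ((a + k * d) * sig a s0 t - k * c * Pi a s0 t) / a.

(* t = v + 1 where v is the index with R_{v+1} <= 0 < R_v, -1 <= v <= m
   (v <= m is expressed as s_v > 0) *)
Definition is_v (a d k c s0 : Z) (t : nat) : Prop :=
  0 < sig a s0 t /\ Rf a d k c s0 (S t) <= 0 < Rf a d k c s0 t.

(* (x,y) ∈ L = A ∪ B, with s_v = sig t, s_{v+1} = sig (t+1),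
   P_v = Pi t, P_{v+1} = Pi (t+1) *)
Definition inL (a s0 : Z) (t : nat) (x y : Z) : Prop :=
  let sv := sig a s0 t in let sv1 := sig a s0 (S t) in
  let Pv := Pi a s0 t in let Pv1 := Pi a s0 (S t) in
  (0 <= x <= sv - 1 /\ 0 <= y <= Pv1 - Pv - 1) \/
  (0 <= x <= sv - sv1 - 1 /\ Pv1 - Pv <= y <= Pv1 - 1).

Definition ceil_div (x k : Z) : Z := - ((- x) / k).

Definition phi (a d k c x y : Z) : Z := ceil_div x k * a + x * d + y * c.

From Stdlib Require Import ZArith Lia.
Open Scope Z_scope.

(* If x0 <> 0 and x0 is not 1 mod k, the ceiling does not move from x0 - 1 to x0, so
   phi(x0, y0) = phi(x0 - 1, y0) + d and g = (phi(x0 - 1, y0) - a) + d.  Pseudo-symmetry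
   puts d in S, in g - S, or at g/2.  The first puts g in S; the second puts
   phi(x0 - 1, y0) - a in S, which is impossible because phi maps L into the Apéry set;
   the third forces (x0, y0) = (2, 0).  For x0 in {0} U (1 + kZ) the ceiling is additive
   on every splitting of x0, which gives the second claim. *)

Lemma ceil_div_spec x k : 0 < k -> k * ceil_div x k - k < x <= k * ceil_div x k.
Proof.
  intros Hk; unfold ceil_div.
  pose proof (Z.div_mod (- x) k ltac:(lia)).
  pose proof (Z.mod_pos_bound (- x) k Hk).
  nia.
Qed.

Lemma ceil_div_unique x k C : 0 < k -> k * C - k < x <= k * C -> ceil_div x k = C.
Proof. intros Hk H; pose proof (ceil_div_spec x k Hk); nia. Qed.

Lemma ceil_div_pred x k : 0 < k -> x mod k <> 1 mod k -> ceil_div (x - 1) k = ceil_div x k.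
Proof.
  intros Hk Hx; pose proof (ceil_div_spec x k Hk) as Hc.
  apply ceil_div_unique; [exact Hk|].
  enough (x <> k * ceil_div x k - k + 1) by lia.
  intros He; apply Hx; rewrite He.
  replace (k * ceil_div x k - k + 1) with (1 + (ceil_div x k - 1) * k) by ring.
  apply Z.mod_add; lia.
Qed.

Lemma ceil_div_add x0 x k : 0 < k -> (x0 = 0 \/ x0 mod k = 1 mod k) -> 0 <= x <= x0 ->
  ceil_div x0 k = ceil_div (x0 - x) k + ceil_div x k.
Proof.
  intros Hk Hx0 Hx.
  pose proof (ceil_div_spec x k Hk); pose proof (ceil_div_spec (x0 - x) k Hk).
  destruct Hx0 as [-> | Hx0].
  - replace x with 0 by lia; rewrite Z.sub_0_r, (ceil_div_unique 0 k 0) by lia; ring.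
  - assert (Hq : x0 = k * (x0 / k - 1 / k) + 1).
    { pose proof (Z.div_mod x0 k ltac:(lia)); pose proof (Z.div_mod 1 k ltac:(lia)); nia. }
    set (q := x0 / k - 1 / k) in Hq.
    rewrite (ceil_div_unique x0 k (q + 1)) by nia.
    nia.
Qed.

Lemma frobenius_unique a d k c g g' :
  is_frobenius a d k c g -> is_frobenius a d k c g' -> g = g'.
Proof.
  intros [Hg Hgt] [Hg' Hgt'].
  destruct (Z.lt_total g g') as [Hlt | [Heq | Hlt]]; [| exact Heq |].
  - exfalso; exact (Hg' (Hgt _ Hlt)).
  - exfalso; exact (Hg (Hgt' _ Hlt)).
Qed.

Lemma sumZ_ext (f h : nat -> Z) n : (forall i, f i = h i) -> sumZ f n = sumZ h n.
Proof. intros H; induction n; simpl; rewrite ?IHn, ?H; reflexivity. Qed.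

Lemma sumZ_add (f h : nat -> Z) n : sumZ (fun i => f i + h i) n = sumZ f n + sumZ h n.
Proof. induction n; simpl; [| rewrite IHn]; ring. Qed.

Lemma sumZ_first (N : Z) (e : nat -> Z) n :
  sumZ (fun i => (if Nat.eqb i 0 then N else 0) * e i) n = N * e O.
Proof. induction n; cbn [sumZ Nat.eqb]; [| rewrite IHn]; ring. Qed.

Lemma inS_add a d k c n1 n2 :
  inS a d k c n1 -> inS a d k c n2 -> inS a d k c (n1 + n2).
Proof.
  intros (u1 & w1 & Hu1 & Hw1 & ->) (u2 & w2 & Hu2 & Hw2 & ->).
  exists (fun i => u1 i + u2 i), (w1 + w2); split; [| split].
  - intros i Hi; specialize (Hu1 i Hi); specialize (Hu2 i Hi); lia.
  - lia.
  - rewrite (sumZ_ext (fun i => (u1 i + u2 i) * (a + Z.of_nat i * d))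
      (fun i => u1 i * (a + Z.of_nat i * d) + u2 i * (a + Z.of_nat i * d))) by (intros; ring).
    rewrite sumZ_add; ring.
Qed.

Lemma inS_a_c a d k c N Y : 0 <= N -> 0 <= Y -> inS a d k c (N * a + Y * c).
Proof.
  intros HN HY; exists (fun i => if Nat.eqb i 0 then N else 0), Y; split; [| split].
  - intros [|i] _; simpl; lia.
  - exact HY.
  - rewrite sumZ_first; simpl; ring.
Qed.

Lemma inS_mul a d k c n z : 0 <= n -> inS a d k c z -> inS a d k c (n * z).
Proof.
  intros Hn Hz; pattern n; apply natlike_ind; [| | exact Hn].
  - rewrite Z.mul_0_l; apply (inS_a_c a d k c 0 0); lia.
  - intros m _ IH; replace (Z.succ m * z) with (m * z + z) by ring; now apply inS_add.
Qed.

(* The generator a + i d contributes one a and i <= k copies of d. *)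
Lemma inS_repr a d k c n : 0 <= k -> inS a d k c n ->
  exists N X Y, 0 <= N /\ 0 <= X <= k * N /\ 0 <= Y /\ n = N * a + X * d + Y * c.
Proof.
  intros Hk (u & w & Hu & Hw & ->).
  assert (Hpart : forall m, (m <= Z.to_nat k)%nat -> exists N X, 0 <= N /\ 0 <= X <= k * N /\
            sumZ (fun i => u i * (a + Z.of_nat i * d)) m = N * a + X * d).
  { induction m as [|m IH]; intros Hm; cbn [sumZ].
    - exists (u O), 0; specialize (Hu O Hm); cbn; repeat split; lia.
    - destruct IH as (N & X & HN & HX & ->); [lia|].
      specialize (Hu (S m) Hm).
      assert (Hi : Z.of_nat (S m) * u (S m) <= k * u (S m)) by nia.
      exists (N + u (S m)), (X + Z.of_nat (S m) * u (S m)); repeat split; nia. }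
  destruct (Hpart (Z.to_nat k) (le_n _)) as (N & X & HN & HX & ->).
  exists N, X, w; repeat split; lia.
Qed.

(* Invariant of the state (x, y, p, r) = (s_{i-1}, s_i, P_{i-1}, P_i) of the recursion. *)
Definition euclid_inv (a s0 x y p r : Z) : Prop :=
  (a | x - s0 * p) /\ (a | y - s0 * r) /\ x * r - y * p = a /\ 0 <= y < x /\ 0 <= p < r.

Lemma euclid_inv_step a s0 x y p r : euclid_inv a s0 x y p r -> y <> 0 ->
  let q := ceil_div x y in euclid_inv a s0 y (q * y - x) r (q * r - p).
Proof.
  intros (Hx & Hy & Hdet & Hxy & Hpr) Hy0 q.
  pose proof (ceil_div_spec x y ltac:(lia)) as Hq; fold q in Hq.
  assert (Hq2 : 2 <= q) by nia.
  repeat split; try nia.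
  - exact Hy.
  - replace (q * y - x - s0 * (q * r - p)) with (q * (y - s0 * r) - (x - s0 * p)) by ring.
    apply Z.divide_sub_r; [apply Z.divide_mul_r|]; assumption.
Qed.

Lemma seqs_inv a s0 t : 0 <= s0 < a ->
  let '(x, y, p, r) := seqs a s0 t in euclid_inv a s0 x y p r \/ (x = 0 /\ y = 0 /\ r = 0).
Proof.
  intros Hs; induction t as [|t IH]; cbn [seqs].
  - left; repeat split; try lia; [exists 1 | exists 0]; ring.
  - destruct (seqs a s0 t) as [[[x y] p] r].
    destruct (y =? 0) eqn:Ey; [right; auto|].
    apply Z.eqb_neq in Ey.
    destruct IH as [IH | (_ & -> & _)]; [| contradiction].
    left; exact (euclid_inv_step a s0 x y p r IH Ey).
Qed.

Lemma euclid_inv_sig a s0 t : 0 <= s0 < a -> 0 < sig a s0 t ->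
  euclid_inv a s0 (sig a s0 t) (sig a s0 (S t)) (Pi a s0 t) (Pi a s0 (S t)).
Proof.
  intros Hs; pose proof (seqs_inv a s0 t Hs) as Hinv.
  unfold sig, Pi; cbn [seqs].
  destruct (seqs a s0 t) as [[[x y] p] r].
  intros Hx; destruct Hinv as [Hinv | (-> & _)]; [| lia].
  destruct (y =? 0) eqn:Ey; [apply Z.eqb_eq in Ey; subst y|]; exact Hinv.
Qed.

(* The vectors (s_{i-1}, -P_{i-1}) and (s_i, -P_i) lie in the lattice {(u, v) : a | u + v s0}
   of index a and span a parallelogram of area a, so they form a basis of it. *)
Lemma lattice_basis a s0 x y p r u v : 0 < a ->
  (a | x - s0 * p) -> (a | y - s0 * r) -> x * r - y * p = a -> (a | u + v * s0) ->
  exists al be, u = al * x + be * y /\ v = - (al * p) - be * r.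
Proof.
  intros Ha [e2 He2] [e1 He1] Hdet [w Hw].
  assert (Hunit : e2 * r - e1 * p = 1).
  { apply (Z.mul_reg_r _ _ a); [lia|].
    transitivity ((x - s0 * p) * r - (y - s0 * r) * p); [rewrite He2, He1|]; lia. }
  assert (Hs0 : e1 * x - e2 * y = - s0).
  { apply (Z.mul_reg_r _ _ a); [lia|].
    transitivity ((y - s0 * r) * x - (x - s0 * p) * y); [rewrite He2, He1|]; lia. }
  exists (r * w + v * e1), (- (p * w + v * e2)); split.
  - transitivity (w * (x * r - y * p) + v * (e1 * x - e2 * y)); [rewrite Hdet, Hs0; lia | ring].
  - transitivity (v * (e2 * r - e1 * p)); [rewrite Hunit | ]; ring.
Qed.

Definition in_Lshape (sv sv1 Pv Pv1 x y : Z) : Prop :=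
  (0 <= x <= sv - 1 /\ 0 <= y <= Pv1 - Pv - 1) \/
  (0 <= x <= sv - sv1 - 1 /\ Pv1 - Pv <= y <= Pv1 - 1).

Lemma Lshape_lattice_signs x y p r x' y' al be :
  0 <= y < x -> 0 <= p < r -> in_Lshape x y p r x' y' ->
  0 <= x' + al * x + be * y -> 0 <= y' - al * p - be * r -> 0 <= al /\ be <= 0.
Proof.
  intros Hxy Hpr HL HX HY.
  assert (Hbe : be <= 0).
  { destruct (Z_le_gt_dec be 0) as [| Hbe]; [assumption | exfalso].
    destruct (Z_le_gt_dec 0 al) as [Hal | Hal]; [unfold in_Lshape in HL; nia|].
    assert (Hge : al + be >= 0) by (unfold in_Lshape in HL; nia).
    assert (Hlower : y' >= r - p) by nia.
    assert (Hupper : al + be <= 0) by (unfold in_Lshape in HL; nia).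
    unfold in_Lshape in HL; nia. }
  split; [| exact Hbe].
  destruct (Z_le_gt_dec 0 al); [assumption | unfold in_Lshape in HL; nia].
Qed.

Lemma divide_lin_form a d c s0 x p :
  (a | d * s0 - c) -> (a | x - s0 * p) -> (a | d * x - c * p).
Proof.
  intros Hs Hx.
  replace (d * x - c * p) with (d * (x - s0 * p) + p * (d * s0 - c)) by ring.
  apply Z.divide_add_r; apply Z.divide_mul_r; assumption.
Qed.

(* Rodseth: phi maps L into the Apery set of S with respect to a.  If
   phi(x', y') - a = N a + X d + Y c, then (X - x', Y - y') is in the lattice of
   lattice_basis; its coordinates have the signs of Lshape_lattice_signs, and with
   R_v > 0 >= R_{v+1} this forces k * ceil(x'/k) - k >= x'. *)
Lemma phi_sub_a_notin_S a d k c s0 x y p r x' y' :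
  0 < a -> 0 < k -> Z.gcd a d = 1 -> (a | d * s0 - c) -> euclid_inv a s0 x y p r ->
  ((a + k * d) * y - k * c * r) / a <= 0 < ((a + k * d) * x - k * c * p) / a ->
  in_Lshape x y p r x' y' -> ~ inS a d k c (phi a d k c x' y' - a).
Proof.
  intros Ha Hk Hgcd Hds Hinv [HR1 HR0] HL HS.
  pose proof Hinv as (Hx & Hy & Hdet & Hxy & Hpr).
  destruct (divide_lin_form a d c s0 x p Hds Hx) as [m0 Hm0].
  destruct (divide_lin_form a d c s0 y r Hds Hy) as [m1 Hm1].
  replace ((a + k * d) * x - k * c * p) with ((x + k * m0) * a) in HR0 by nia.
  replace ((a + k * d) * y - k * c * r) with ((y + k * m1) * a) in HR1 by nia.
  rewrite Z.div_mul in HR0, HR1 by lia.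
  destruct (inS_repr a d k c _ ltac:(lia) HS) as (N & X & Y & HN & HX & HY & Hrep).
  unfold phi in Hrep; set (C := ceil_div x' k) in Hrep.
  pose proof (ceil_div_spec x' k Hk) as HC; fold C in HC.
  assert (Huv : (X - x') * d + (Y - y') * c = (C - N - 1) * a) by lia.
  assert (Hlat : (a | X - x' + (Y - y') * s0)).
  { apply (Z.gauss _ d); [| exact Hgcd].
    replace (d * (X - x' + (Y - y') * s0))
      with ((X - x') * d + (Y - y') * c + (Y - y') * (d * s0 - c)) by ring.
    rewrite Huv; apply Z.divide_add_r; [apply Z.divide_factor_r | now apply Z.divide_mul_r]. }
  destruct (lattice_basis a s0 x y p r _ _ Ha Hx Hy Hdet Hlat) as (al & be & Hu & Hv).
  destruct (Lshape_lattice_signs x y p r x' y' al be Hxy Hpr HL) as [Hal Hbe]; [lia | lia |].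
  assert (Hcoord : C - N - 1 = al * m0 + be * m1).
  { apply (Z.mul_reg_r _ _ a); [lia|]; rewrite <- Huv, Hu, Hv; nia. }
  assert (0 <= al * (x + k * m0)) by nia.
  assert (0 <= be * (y + k * m1)) by nia.
  nia.
Qed.

Lemma phi_inL_sub_a_notin_S a d k c s0 t x y :
  0 < a -> 0 < k -> Z.gcd a d = 1 -> 0 <= s0 < a -> (a | d * s0 - c) ->
  is_v a d k c s0 t -> inL a s0 t x y -> ~ inS a d k c (phi a d k c x y - a).
Proof.
  intros Ha Hk Hgcd Hs0 Hds [Hsig HR] HL.
  exact (phi_sub_a_notin_S a d k c s0 _ _ _ _ x y Ha Hk Hgcd Hds
           (euclid_inv_sig a s0 t Hs0 Hsig) HR HL).
Qed.

Lemma inL_nonneg a d k c s0 t x y : 0 <= s0 < a -> is_v a d k c s0 t ->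
  inL a s0 t x y -> 0 <= x /\ 0 <= y.
Proof.
  intros Hs0 [Hsig _] HL.
  destruct (euclid_inv_sig a s0 t Hs0 Hsig) as (_ & _ & _ & _ & Hpr).
  unfold inL in HL; lia.
Qed.

Lemma pseudo_symmetric_max_residue a d k c s0 t g x0 y0 :
  0 < a -> 0 < d -> 0 < k -> 0 < c -> Z.gcd a d = 1 ->
  0 <= s0 < a -> (a | d * s0 - c) -> is_v a d k c s0 t ->
  is_frobenius a d k c g -> pseudo_symmetric a d k c ->
  inL a s0 t x0 y0 -> phi a d k c x0 y0 = g + a -> (x0, y0) <> (2, 0) ->
  x0 = 0 \/ x0 mod k = 1 mod k.
Proof.
  intros Ha Hd Hk Hc Hgcd Hs0 Hds Hv Hfr Hps HL Hphi H20.
  destruct (Z.eq_dec x0 0) as [| Hx0]; [now left|].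
  destruct (Z.eq_dec (x0 mod k) (1 mod k)) as [| Hx1]; [now right | exfalso].
  destruct Hps as (g' & Hfr' & [m Hm] & Hsym).
  rewrite (frobenius_unique a d k c g' g Hfr' Hfr) in Hm, Hsym.
  destruct (inL_nonneg a d k c s0 t x0 y0 Hs0 Hv HL) as [_ Hy0].
  assert (Hpos : 1 <= x0) by (unfold inL in HL; lia).
  assert (HC : 1 <= ceil_div x0 k) by (pose proof (ceil_div_spec x0 k ltac:(lia)); nia).
  assert (Hshift : phi a d k c x0 y0 = phi a d k c (x0 - 1) y0 + d)
    by (unfold phi; rewrite ceil_div_pred by lia; ring).
  destruct (Z.eq_dec d (g / 2)) as [Hhalf | Hhalf].
  - rewrite Hm, Z.mul_comm, Z.div_mul in Hhalf by lia; subst m.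
    assert (x0 <> 1) by (intros ->; apply Hx1; reflexivity).
    unfold phi in Hphi.
    assert (0 <= (ceil_div x0 k - 1) * a /\ 0 <= (x0 - 2) * d /\ 0 <= y0 * c) by nia.
    apply H20; f_equal; nia.
  - apply Hsym in Hhalf as [HdS | (s & HsS & Hs)].
    + apply (proj1 Hfr).
      replace g with ((ceil_div x0 k - 1) * a + y0 * c + x0 * d) by (unfold phi in Hphi; lia).
      apply inS_add; [apply inS_a_c | apply inS_mul]; lia || assumption.
    + apply (phi_inL_sub_a_notin_S a d k c s0 t (x0 - 1) y0); try lia; try assumption.
      * unfold inL in *; lia.
      * replace (phi a d k c (x0 - 1) y0 - a) with s by lia; exact HsS.
Qed.

Theorem lemma6 (a d k c s0 : Z) (t : nat) (g x0 y0 : Z) :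
  0 < a -> 0 < d -> 2 <= k -> 0 < c ->
  gens_coprime a d k c -> Z.gcd a d = 1 ->
  0 <= s0 < a -> (a | d * s0 - c) ->
  is_v a d k c s0 t ->
  is_frobenius a d k c g ->
  pseudo_symmetric a d k c ->
  inL a s0 t x0 y0 ->
  phi a d k c x0 y0 = g + a ->
  (x0, y0) <> (2, 0) ->
  (x0 = 0 \/ x0 mod k = 1 mod k) /\
  (forall x y : Z, 0 <= x <= x0 -> 0 <= y <= y0 ->
     phi a d k c x0 y0 = phi a d k c (x0 - x) (y0 - y) + phi a d k c x y).
Proof.
  intros Ha Hd Hk Hc _ Hgcd Hs0 Hds Hv Hfr Hps HL Hphi H20.
  assert (Hx0 : x0 = 0 \/ x0 mod k = 1 mod k)
    by exact (pseudo_symmetric_max_residue a d k c s0 t g x0 y0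
                Ha Hd ltac:(lia) Hc Hgcd Hs0 Hds Hv Hfr Hps HL Hphi H20).
  split; [exact Hx0|].
  intros x y Hx _; unfold phi.
  rewrite (ceil_div_add x0 x k) by lia || assumption; ring.
Qed.
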